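(* Suppose that for each $k=1,\dots,K$ the Markov kernel $p_k$ on $\Theta$ is $\mu_k$-reversible. For $\sigma\in S_K$ define the swapped kernel $\mathbf p_\sigma(\boldsymbol\theta,\cdot)=p_{\sigma(1)}(\theta_1,\cdot)\times\dots\times p_{\sigma(K)}(\theta_K,\cdot)$, the swapped density $\boldsymbol\pi_\sigma(\boldsymbol\theta)=\prod_{k=1}^K\pi_{\sigma(k)}(\theta_k)$, and the weights $w_\sigma(\boldsymbol\theta)=\boldsymbol\pi_\sigma(\boldsymbol\theta)/\sum_{\sigma'\in S_K}\boldsymbol\pi_{\sigma'}(\boldsymbol\theta)$. Let the Weighted Generalized Parallel Tempering kernel be $\mathbf p^{(\mathrm W)}(\boldsymbol\theta,\cdot)=\sum_{\sigma\in S_K}w_\sigma(\boldsymbol\theta)\mathbf p_\sigma(\boldsymbol\theta,\cdot)$, and let $\boldsymbol\mu_{\mathrm W}=\frac{1}{|S_K|}\sum_{\sigma\in S_K}\boldsymbol\mu_\sigma$, where $\boldsymbol\mu_\sigma=\mu_{\sigma(1)}\times\dots\times\mu_{\sigma(K)}$; equivalently $\boldsymbol\mu_{\mathrm W}$ has $\boldsymbol\mu_{\mathrm{pr}}$-density $\boldsymbol\pi_{\mathrm W}=\frac{1}{|S_K|}\sum_{\sigma\in S_K}\boldsymbol\pi_\sigma$. Then the Markov chain generated by $\mathbf p^{(\mathrm W)}$ is $\boldsymbol\mu_{\mathrm W}$-reversible.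
   Context: Let $\Theta$ be a separable Banach space with Borel $\sigma$-algebra, $\mu_{\mathrm{pr}}$ a probability measure on $\Theta$, and $\Phi:\Theta\to\mathbb R$ a measurable potential. Fix $K\ge1$ and temperatures $1=T_1<\dots<T_K\le\infty$; $\mu_k$ is the probability measure with $\mu_{\mathrm{pr}}$-density $\pi_k(\theta)=e^{-\Phi(\theta)/T_k}/Z_k$, $Z_k=\int_\Theta e^{-\Phi/T_k}d\mu_{\mathrm{pr}}$ ($\mu_K=\mu_{\mathrm{pr}}$ if $T_K=\infty$). $\Theta^K$ carries the product $\sigma$-algebra, $\boldsymbol\mu_{\mathrm{pr}}=\mu_{\mathrm{pr}}^{\times K}$, and $S_K$ is a set of permutations of $\{1,\dots,K\}$ closed under inversion. A kernel $p$ is $\nu$-reversible if $\int_B p(\theta,A)\nu(d\theta)=\int_A p(\theta,B)\nu(d\theta)$ for all measurable $A,B$. *)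

From HB Require Import structures.
From mathcomp Require Import all_boot all_order all_algebra all_fingroup.
From mathcomp Require Import all_classical all_reals all_analysis.
Set Implicit Arguments. Unset Strict Implicit. Unset Printing Implicit Defensive.
Import Order.TTheory GRing.Theory Num.Theory.
Local Open Scope classical_set_scope.
Local Open Scope ring_scope.

Section defs.
Context {R : realType} {d : measure_display} {T : measurableType d}.

(* inverse temperature 1/T_k, with the convention 1/+oo = 0 *)
Definition invtemp (t : \bar R) : R :=
  match t with EFin r => r^-1 | _ => 0 end.

Definition tempered (Phi : T -> R) (t : \bar R) (x : T) : R :=
  expR (- (invtemp t * Phi x)).

Definition normconst (mupr : set T -> \bar R) (Phi : T -> R) (t : \bar R)
  : \bar R := (\int[mupr]_x (tempered Phi t x)%:E)%E.

Definition tdensity (mupr : set T -> \bar R) (Phi : T -> R) (t : \bar R)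
  (x : T) : R := tempered Phi t x / fine (normconst mupr Phi t).

Definition rect (K : nat) (A : 'I_K -> set T) : set (K.-tuple T) :=
  [set x | forall i, A i (tnth x i)].

Definition is_product_measure (K : nat) (m : 'I_K -> set T -> \bar R)
  (nu : set (K.-tuple T) -> \bar R) : Prop :=
  forall A : 'I_K -> set T, (forall i, measurable (A i)) ->
    nu (rect A) = (\prod_(i < K) m i (A i))%E.

Definition reversible {d' : measure_display} {X : measurableType d'}
  (p : X -> set X -> \bar R) (nu : set X -> \bar R) : Prop :=
  forall A B : set X, measurable A -> measurable B ->
    (\int[nu]_(x in B) p x A = \int[nu]_(x in A) p x B)%E.

Definition swapped_density (K : nat) (pi : 'I_K -> T -> R)
  (s : {perm 'I_K}) (th : K.-tuple T) : R :=
  \prod_(i < K) pi (s i) (tnth th i).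

Definition swap_weight (K : nat) (pi : 'I_K -> T -> R)
  (SK : {set {perm 'I_K}}) (s : {perm 'I_K}) (th : K.-tuple T) : R :=
  swapped_density pi s th / \sum_(s' in SK) swapped_density pi s' th.

Definition wgpt_kernel (K : nat) (pi : 'I_K -> T -> R)
  (SK : {set {perm 'I_K}})
  (psig : {perm 'I_K} -> K.-tuple T -> set (K.-tuple T) -> \bar R)
  (th : K.-tuple T) (A : set (K.-tuple T)) : \bar R :=
  (\sum_(s in SK) (swap_weight pi SK s th)%:E * psig s th A)%E.

End defs.

From HB Require Import structures.
From mathcomp Require Import all_boot all_order all_algebra all_fingroup.
From mathcomp Require Import all_classical all_reals all_analysis.
From mathcomp Require Import measurable_realfun.
From mathcomp.algebra_tactics Require Import ring.
Set Implicit Arguments.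
Unset Strict Implicit.
Unset Printing Implicit Defensive.
Import Order.TTheory GRing.Theory Num.Theory.
Local Open Scope classical_set_scope.
Local Open Scope ring_scope.

(* Take mu_id = mu_1 x ... x mu_K as reference measure.  Each mu_sigma has
   density rho_sigma = pi_sigma / pi_id with respect to it (a product of
   one-dimensional density ratios, identified on rectangles), and the weights
   satisfy w_sigma * sum_sigma' rho_sigma' = rho_sigma.  Since
   mu_W = |S_K|^-1 sum_sigma mu_sigma, this gives
     int_B p_W(th, A) mu_W(d th) = |S_K|^-1 sum_sigma int_B p_sigma(th, A) mu_sigma(d th),
   and every summand is symmetric in A and B: on rectangles both sides factor
   into one-dimensional integrals that are symmetric by reversibility of the
   p_k, and two finite measures agreeing on the pi-system of rectangles agree
   everywhere.  The factorization of the integral of a tensor product is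
   proved one coordinate at a time, replacing indicators by general functions. *)

Section integration_facts.
Local Open Scope ereal_scope.
Context d (X : measurableType d) (R : realType).

Lemma integral_mkcond_indic (mu : {measure set X -> \bar R}) D (f : X -> \bar R) :
  \int[mu]_(x in D) f x = \int[mu]_x ((\1_D x)%:E * f x).
Proof.
by rewrite integral_mkcond epatch_indic; apply: eq_integral => x _; rewrite /= muleC.
Qed.

Lemma measurable_funV_gt0 (f : X -> R) : (forall x, 0 < f x)%R ->
  measurable_fun setT f -> measurable_fun setT (fun x => (f x)^-1%R).
Proof.
move=> f_gt0 mf; have -> : (fun x => (f x)^-1%R) = fun x => expR (- ln (f x)).
  by apply/funext => x; rewrite expRN lnK// posrE.
by apply: measurableT_comp => //; apply: measurableT_comp => //; exact: measurableT_comp.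
Qed.

Lemma measurable_sum_in (I : finType) (S : {pred I}) (h : I -> X -> R) :
  (forall i, measurable_fun setT (h i)) ->
  measurable_fun setT (fun x => \sum_(i in S) h i x)%R.
Proof.
move=> mh; apply: eq_measurable_fun (measurable_sum (enum S) mh) => x _.
exact: big_enum.
Qed.

Lemma emeasurable_sum_in (I : finType) (S : {pred I}) (h : I -> X -> \bar R) :
  (forall i, measurable_fun setT (h i)) ->
  measurable_fun setT (fun x => \sum_(i in S) h i x).
Proof.
move=> mh; apply: eq_measurable_fun (emeasurable_sum (enum S) mh) => x _.
exact: big_enum.
Qed.

End integration_facts.

Section measure_with_density.
Local Open Scope ereal_scope.
Import HBNNSimple.
Context d (X : measurableType d) (R : realType).
Variables (mu : {measure set X -> \bar R}) (h : X -> \bar R).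
Hypotheses (h0 : forall x, 0 <= h x) (mh : measurable_fun setT h).

(* [h0] and [mh] are arguments only so that the measure instance below can be
   keyed on [mdensity h0 mh]; the same device is used for [kintegral]. *)
Definition mdensity (_ : forall x, 0 <= h x) (_ : measurable_fun setT h)
    (A : set X) : \bar R :=
  \int[mu]_(x in A) h x.

Let mdensity0 : mdensity h0 mh set0 = 0. Proof. exact: integral_set0. Qed.

Let mdensity_ge0 A : 0 <= mdensity h0 mh A. Proof. exact: integral_ge0. Qed.

Let mdensity_sigma_additive : semi_sigma_additive (mdensity h0 mh).
Proof.
move=> F mF tF mUF; rewrite /mdensity ge0_integral_bigcup//.
- by apply: is_cvg_ereal_nneg_natsum => n _; exact: integral_ge0.
- exact: measurable_funS mh.
Qed.

HB.instance Definition _ := isMeasure.Build _ _ _ (mdensity h0 mh)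
  mdensity0 mdensity_ge0 mdensity_sigma_additive.

Lemma integral_mdensity_nnsfun (g : {nnsfun X >-> R}) :
  \int[mdensity h0 mh]_x (g x)%:E = \int[mu]_x ((g x)%:E * h x).
Proof.
have g0 r x : 0 <= (r * \1_(g @^-1` [set r]) x)%:E.
  by rewrite nnfun_muleindic_ge0.
transitivity (\int[mu]_x \sum_(r \in range g) (r * \1_(g @^-1` [set r]) x)%:E * h x);
  last first.
  apply: eq_integral => x _; rewrite -ge0_mule_fsuml//.
  by rewrite fsumEFin// -fimfunE.
rewrite ge0_integral_fsum//; last 2 first.
- by move=> r; apply: emeasurable_funM => //; exact/measurable_EFinP/measurable_funM.
- by move=> r x _; rewrite mule_ge0.
under eq_integral do rewrite fimfunE -fsumEFin//.
rewrite ge0_integral_fsum//; last by move=> r; exact/measurable_EFinP/measurable_funM.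
apply: eq_fsbigr => r /[!inE] -[x _ <-].
under [RHS]eq_integral do rewrite EFinM -muleA.
rewrite integralZl_indic_nnsfun// ge0_integralZl ?lee_fin//.
- by rewrite integral_indic//= setIT -integral_mkcond_indic.
- by apply: emeasurable_funM => //; exact/measurable_EFinP.
- by move=> y _; rewrite mule_ge0 ?lee_fin.
Qed.

Lemma integral_mdensity (f : X -> \bar R) : (forall x, h x \is a fin_num) ->
  (forall x, 0 <= f x) -> measurable_fun setT f ->
  \int[mdensity h0 mh]_x f x = \int[mu]_x (f x * h x).
Proof.
move=> hfin f0 mf; pose g := nnsfun_approx measurableT mf.
have g_f x : (g n x)%:E @[n --> \oo] --> f x by exact: cvg_nnsfun_approx.
have nd_g x : {homo (fun n => (g n x)%:E) : m n / (m <= n)%N >-> m <= n}.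
  by move=> m n mn; rewrite lee_fin; exact/lefP/nd_nnsfun_approx.
have mg n : measurable_fun setT (fun x => (g n x)%:E) by exact/measurable_EFinP.
transitivity (limn (fun n => \int[mdensity h0 mh]_x (g n x)%:E)).
  under eq_integral => x _ do rewrite -(cvg_lim _ (g_f x))//.
  by apply: monotone_convergence => // n x _; rewrite lee_fin.
transitivity (limn (fun n => \int[mu]_x ((g n x)%:E * h x))).
  by under eq_fun do rewrite integral_mdensity_nnsfun.
under [RHS]eq_integral => x _ do rewrite -(cvg_lim _ (cvgeZr (hfin x) (g_f x)))//.
apply/esym/monotone_convergence => //.
- by move=> n; exact: emeasurable_funM.
- by move=> n x _; rewrite mule_ge0 ?lee_fin.
- by move=> x _ m n mn; rewrite lee_wpmul2r ?nd_g.
Qed.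

Lemma integral_density (nu : {measure set X -> \bar R}) (f : X -> \bar R) :
  (forall x, h x \is a fin_num) ->
  (forall A, measurable A -> nu A = \int[mu]_(x in A) h x) ->
  (forall x, 0 <= f x) -> measurable_fun setT f ->
  \int[nu]_x f x = \int[mu]_x (f x * h x).
Proof.
move=> hfin nuE f0 mf; rewrite -integral_mdensity//.
by apply: eq_measure_integral => A mA _; rewrite nuE.
Qed.

Lemma integral_comp_density d' (Y : measurableType d')
    (nu : {measure set Y -> \bar R}) (phi : X -> Y) (c : R) (f : Y -> \bar R) :
  measurable_fun setT phi -> (0 <= c)%R -> (forall x, h x \is a fin_num) ->
  (forall B, measurable B -> \int[mu]_(x in phi @^-1` B) h x = c%:E * nu B) ->
  (forall y, 0 <= f y) -> measurable_fun setT f ->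
  \int[mu]_x (f (phi x) * h x) = c%:E * \int[nu]_y f y.
Proof.
move=> mphi c0 hfin nuE f0 mf.
rewrite -(integral_mdensity (f := f \o phi))//; last 2 first.
- by move=> x; exact: f0.
- exact: measurableT_comp.
rewrite -[X in \int[_]_(x in X) _](preimage_setT phi) -ge0_integral_pushforward//.
transitivity (\int[mscale (NngNum c0) nu]_y f y).
  by apply: eq_measure_integral => B mB _; exact: nuE.
by rewrite (ge0_integral_mscale _ measurableT)// => y _.
Qed.

End measure_with_density.

Section kernel_integral.
Local Open Scope ereal_scope.
Context d d' (X : measurableType d) (Y : measurableType d') (R : realType).
Variables (mu : {measure set X -> \bar R}) (D : set X) (mD : measurable D)
  (k : R.-ker X ~> Y).

Definition kintegral (_ : measurable D) (B : set Y) : \bar R :=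
  \int[mu]_(x in D) k x B.

Let kintegral0 : kintegral mD set0 = 0.
Proof. by rewrite /kintegral; under eq_integral do rewrite measure0; exact: integral0. Qed.

Let kintegral_ge0 B : 0 <= kintegral mD B. Proof. exact: integral_ge0. Qed.

Let kintegral_sigma_additive : semi_sigma_additive (kintegral mD).
Proof.
move=> F mF tF mUF; rewrite /kintegral.
under eq_integral => x _ do rewrite -(cvg_lim _ (measure_semi_sigma_additive _ mF tF mUF))//.
rewrite integral_nneseries//.
- by apply: is_cvg_ereal_nneg_natsum => n _; exact: integral_ge0.
- by move=> n; apply: measurable_funTS; exact: measurable_kernel.
Qed.

HB.instance Definition _ := isMeasure.Build _ _ _ (kintegral mD)
  kintegral0 kintegral_ge0 kintegral_sigma_additive.

End kernel_integral.

Section rectangles.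
Context d (T : measurableType d) (K : nat).
Local Notation X := (K.-tuple T).

Definition rects : set (set X) :=
  [set rect A | A in [set A : 'I_K -> set T | forall i, measurable (A i)]].

Lemma rectE (A : 'I_K -> set T) :
  rect A = \big[setI/setT]_(i < K) ((fun x : X => tnth x i) @^-1` A i).
Proof.
apply/seteqP; split => x; rewrite -bigcap_seq.
  by move=> Ax i _; exact: Ax.
by move=> Ax i; apply: Ax; rewrite /= mem_index_enum.
Qed.

Lemma measurable_rect (A : 'I_K -> set T) :
  (forall i, measurable (A i)) -> measurable (rect A).
Proof.
move=> mA; rewrite rectE; apply: bigsetI_measurable => i _.
by rewrite -[X in measurable X]setTI; exact: measurable_tnth.
Qed.

Lemma rect_setT : rect (fun _ => setT) = [set: X].
Proof. by apply/seteqP; split. Qed.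

Lemma setI_closed_rects : setI_closed rects.
Proof.
move=> _ _ [A mA <-] [B mB <-].
exists (fun i => A i `&` B i); first by move=> i; exact: measurableI.
by apply/seteqP; split => [x ABx|x [Ax Bx] i]; [split => i; case: (ABx i)|].
Qed.

Lemma measurable_rects : @measurable _ X = <<s rects >>.
Proof.
apply/seteqP; split; last first.
  by apply: smallest_sub; [exact: smallest_sigma_algebra|move=> _ [A mA <-]; exact: measurable_rect].
apply: smallest_sub; first exact: smallest_sigma_algebra.
move=> E; rewrite -bigcup_seq => -[i _ [B mB <-]]; apply: sub_sigma_algebra.
exists (fun k => if k == i then B else setT); first by move=> k; case: ifP.
apply/seteqP; split => [x /(_ i)|x [_ Bx] k]; first by rewrite eqxx.
by case: ifPn => // /eqP ->.
Qed.

Lemma measure_unique_rect (R : realType) (m1 m2 : {measure set X -> \bar R}) :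
  (m1 setT < +oo)%E ->
  (forall A : 'I_K -> set T, (forall i, measurable (A i)) -> m1 (rect A) = m2 (rect A)) ->
  forall E, measurable E -> m1 E = m2 E.
Proof.
move=> m1_fin m12 E mE.
apply: (measure_unique rects (fun _ => setT)) => //.
- exact: measurable_rects.
- exact: setI_closed_rects.
- by move=> _; exists (fun _ => setT) => //; exact: rect_setT.
- by rewrite bigcup_const.
- by move=> _ [A mA <-]; exact: m12.
Qed.

Definition tensor (R : pzSemiRingType) (f : 'I_K -> T -> R) (x : X) : R :=
  \prod_(i < K) f i (tnth x i).

Lemma tensor_indic (R : comPzRingType) (A : 'I_K -> set T) :
  tensor (fun i => \1_(A i)) = \1_(rect A) :> (X -> R).
Proof.
apply/funext => x; rewrite /tensor indicE; have [Ax|nAx] := pselect (rect A x).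
  by rewrite mem_set// big1// => i _; rewrite indicE mem_set//; exact: Ax.
rewrite memNset//; move/existsNP: nAx => [i nAi].
by rewrite (bigD1 i)//= indicE memNset// mul0r.
Qed.

Lemma tensor_update (R : comPzSemiRingType) (f : 'I_K -> T -> R) j g x :
  tensor (fun i => if i == j then g else f i) x =
  g (tnth x j) * \prod_(i < K | i != j) f i (tnth x i).
Proof.
rewrite /tensor (bigD1 j)//= eqxx; congr (_ * _).
by apply: eq_bigr => i /negbTE ->.
Qed.

Lemma tensorM (R : comPzSemiRingType) (f g : 'I_K -> T -> R) x :
  tensor f x * tensor g x = tensor (fun i y => f i y * g i y) x.
Proof. by rewrite /tensor -big_split. Qed.

Lemma measurable_tensor (R : realType) (f : 'I_K -> T -> R) :
  (forall i, measurable_fun setT (f i)) -> measurable_fun setT (tensor f).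
Proof.
move=> mf; apply: measurable_prod => i _.
exact: measurableT_comp (mf i) (measurable_tnth i).
Qed.

End rectangles.

Section integral_tensor.
Local Open Scope ereal_scope.
Context d (T : measurableType d) (R : realType) (K : nat).
Local Notation X := (K.-tuple T).
Variables (P : {measure set X -> \bar R}) (m : 'I_K -> {measure set T -> \bar R}).
Hypotheses (m_fin : forall i, m i setT < +oo)
  (P_rect : is_product_measure (fun i => m i : set T -> \bar R) P).

Definition nnintegrable_family (f : 'I_K -> T -> R) :=
  [/\ forall i x, (0 <= f i x)%R, forall i, measurable_fun setT (f i)
    & forall i, \int[m i]_x (f i x)%:E < +oo].

Lemma integral_tensor_indic (A : 'I_K -> set T) : (forall i, measurable (A i)) ->
  \int[P]_x (tensor (fun i => \1_(A i)) x)%:E = \prod_(i < K) m i (A i).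
Proof.
move=> mA; rewrite tensor_indic integral_indic ?setIT ?P_rect//.
exact: measurable_rect.
Qed.

Lemma nnintegrable_family_update (f : 'I_K -> T -> R) j E :
  nnintegrable_family f -> measurable E ->
  nnintegrable_family (fun i => if i == j then \1_E else f i).
Proof.
move=> [f0 mf f_fin] mE; split=> [i x|i|i]; case: ifP => // _.
by rewrite integral_indic// setIT (le_lt_trans _ (m_fin i))// le_measure// inE.
Qed.

(* The hypothesis says that the image of [P] under the [j]-th coordinate, weighted
   by the product [h] of the other factors, is a multiple of [m j]. *)
Lemma integral_tensor_update (f : 'I_K -> T -> R) j : nnintegrable_family f ->
  (forall E, measurable E ->
     \int[P]_x (tensor (fun i => if i == j then \1_E else f i) x)%:E =
     \prod_(i < K) \int[m i]_y ((if i == j then \1_E else f i) y)%:E) ->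
  \int[P]_x (tensor f x)%:E = \prod_(i < K) \int[m i]_y (f i y)%:E.
Proof.
move=> [f0 mf f_fin] f_indic_j.
pose h x := (\prod_(i < K | i != j) f i (tnth x i))%R.
pose c := \prod_(i < K | i != j) \int[m i]_y (f i y)%:E.
have c_fin : c \is a fin_num.
  apply: prode_fin_num => i _; rewrite ge0_fin_numE ?f_fin//.
  by apply: integral_ge0 => y _; rewrite lee_fin.
have tensor_update_f g x :
    tensor (fun i => if i == j then g else f i) x = (g (tnth x j) * h x)%R.
  exact: tensor_update.
have h0 x : 0 <= (h x)%:E by rewrite lee_fin; apply: prodr_ge0 => i _; exact: f0.
have mh : measurable_fun setT (fun x => (h x)%:E).
  apply/measurable_EFinP.
  apply: (eq_measurable_fun (tensor (fun i => if i == j then cst 1%R else f i))).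
    by move=> x _; rewrite tensor_update_f mul1r.
  by apply: measurable_tensor => i; case: ifP.
have integral_h E : measurable E ->
    \int[P]_(x in (fun x : X => tnth x j) @^-1` E) (h x)%:E = (fine c)%:E * m j E.
  move=> mE; rewrite integral_mkcond_indic.
  under eq_integral => x _.
    by rewrite -EFinM (_ : \1__ x = \1_E (tnth x j))// -tensor_update_f; over.
  rewrite f_indic_j// (bigD1 j)//= eqxx integral_indic// setIT fineK// muleC.
  by congr (_ * _); apply: eq_bigr => i /negbTE ->.
have tensor_f x : tensor f x = (f j (tnth x j) * h x)%R.
  by rewrite -tensor_update_f; congr tensor; apply/funext => i; case: eqP => // ->.
under eq_integral do rewrite tensor_f EFinM.
rewrite (bigD1 j)//= -/c -[c]fineK// muleC.
apply: (integral_comp_density (f := fun y => (f j y)%:E) h0 mh (measurable_tnth j)).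
- by rewrite fine_ge0// prode_ge0// => i _; apply: integral_ge0 => y _; rewrite lee_fin.
- by [].
- exact: integral_h.
- by move=> y; rewrite lee_fin.
- exact/measurable_EFinP.
Qed.

Lemma integral_tensor_partial n (J : {set 'I_K}) (f : 'I_K -> T -> R) :
  #|J| = n -> nnintegrable_family f ->
  (forall i, i \notin J -> exists2 A, measurable A & f i = \1_A) ->
  \int[P]_x (tensor f x)%:E = \prod_(i < K) \int[m i]_y (f i y)%:E.
Proof.
elim: n J f => [|n IH] J f cardJ ff f_indic.
  have /choice [A hA] i : exists A, measurable A /\ f i = \1_A.
    have [|A mA ->] := f_indic i; last by exists A.
    by move/eqP: cardJ; rewrite cards_eq0 => /eqP ->; rewrite inE.
  have mA i : measurable (A i) by case: (hA i).
  have -> : f = fun i => \1_(A i) by apply/funext => i; case: (hA i).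
  rewrite integral_tensor_indic//; apply: eq_bigr => i _.
  by rewrite integral_indic ?setIT.
have [j jJ] : exists j, j \in J by apply/set0Pn; rewrite -card_gt0 cardJ.
apply: (integral_tensor_update (j := j) ff) => E mE.
apply: (IH (J :\ j)); last 2 first.
- exact: nnintegrable_family_update.
- move=> i; rewrite in_setD1 negb_and negbK => /orP[/eqP ->|iJ].
    by rewrite eqxx; exists E.
  by case: ifP => _; [exists E|exact: f_indic].
by move: cardJ; rewrite (cardsD1 j) jJ add1n => -[].
Qed.

Lemma integral_tensor (f : 'I_K -> T -> R) : nnintegrable_family f ->
  \int[P]_x (tensor f x)%:E = \prod_(i < K) \int[m i]_y (f i y)%:E.
Proof.
by move=> ff; apply: (integral_tensor_partial (J := [set: 'I_K]%SET)) => // i; rewrite inE.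
Qed.

End integral_tensor.

Section density_ratio.
Local Open Scope ereal_scope.
Context d (T : measurableType d) (R : realType).

Lemma density_ratio (mu nu1 nu2 : {measure set T -> \bar R}) (q1 q2 : T -> R) :
  (forall y, 0 < q1 y)%R -> (forall y, 0 <= q2 y)%R ->
  measurable_fun setT q1 -> measurable_fun setT q2 ->
  (forall A, measurable A -> nu1 A = \int[mu]_(y in A) (q1 y)%:E) ->
  (forall A, measurable A -> nu2 A = \int[mu]_(y in A) (q2 y)%:E) ->
  forall A, measurable A -> nu2 A = \int[nu1]_(y in A) (q2 y / q1 y)%:E.
Proof.
move=> q1_gt0 q2_ge0 mq1 mq2 nu1E nu2E A mA.
have q1E_ge0 y : 0 <= (q1 y)%:E by rewrite lee_fin ltW.
have mq1E : measurable_fun setT (fun y => (q1 y)%:E) by exact/measurable_EFinP.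
rewrite nu2E// integral_mkcond_indic [RHS]integral_mkcond_indic (integral_density q1E_ge0 mq1E _ nu1E)//.
- apply: eq_integral => y _; rewrite -!EFinM -mulrA mulfVK//.
  by rewrite gt_eqF.
- by move=> y; rewrite mule_ge0// lee_fin divr_ge0// ltW.
- apply: emeasurable_funM; first exact/measurable_EFinP/measurable_indic.
  apply/measurable_EFinP/measurable_funM => //.
  exact: measurable_funV_gt0.
Qed.

End density_ratio.

Section density_tensor.
Local Open Scope ereal_scope.
Context d (T : measurableType d) (R : realType) (K : nat).
Local Notation X := (K.-tuple T).
Variables (P1 : {measure set X -> \bar R}) (P2 : {finite_measure set X -> \bar R})
  (m1 : 'I_K -> {finite_measure set T -> \bar R})
  (m2 : 'I_K -> {finite_measure set T -> \bar R}) (rho : 'I_K -> T -> R).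
Hypotheses (P1_rect : is_product_measure (fun i => m1 i : set T -> \bar R) P1)
  (P2_rect : is_product_measure (fun i => m2 i : set T -> \bar R) P2)
  (rho_ge0 : forall i y, (0 <= rho i y)%R)
  (mrho : forall i, measurable_fun setT (rho i))
  (m2E : forall i A, measurable A -> m2 i A = \int[m1 i]_(y in A) (rho i y)%:E).

Lemma density_tensor E : measurable E -> P2 E = \int[P1]_(x in E) (tensor rho x)%:E.
Proof.
have rhoE_ge0 x : 0 <= (tensor rho x)%:E by rewrite lee_fin prodr_ge0.
have mrhoE : measurable_fun setT (fun x => (tensor rho x)%:E).
  by apply/measurable_EFinP; exact: measurable_tensor.
apply: (measure_unique_rect (m2 := mdensity P1 rhoE_ge0 mrhoE)).
  exact: fin_num_fun_lty (fin_num_measure P2).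
move=> A mA; rewrite [LHS](P2_rect mA).
rewrite -[RHS]/(\int[P1]_(x in rect A) (tensor rho x)%:E) integral_mkcond_indic.
under eq_integral do rewrite -EFinM -tensor_indic tensorM.
rewrite (integral_tensor _ P1_rect).
- apply: eq_bigr => i _; rewrite m2E// [LHS]integral_mkcond_indic.
  by apply: eq_integral => y _; rewrite EFinM.
- by move=> i; exact: fin_num_fun_lty (fin_num_measure (m1 i)).
split=> [i y|i|i]; first by rewrite mulr_ge0.
  by apply: measurable_funM => //; exact: measurable_indic.
under eq_integral do rewrite EFinM.
by rewrite -integral_mkcond_indic -m2E// -ge0_fin_numE// fin_num_measure.
Qed.

End density_tensor.

Section probability_kernel_bounds.
Local Open Scope ereal_scope.
Context d d' (X : measurableType d) (Y : measurableType d') (R : realType).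
Variable k : R.-pker X ~> Y.

Lemma pker_le1 x A : measurable A -> k x A <= 1.
Proof. by move=> mA; rewrite -(@prob_kernel _ _ _ _ _ k x) le_measure// inE. Qed.

Lemma integral_pker_lty (mu : {finite_measure set X -> \bar R}) D A :
  measurable D -> measurable A -> \int[mu]_(x in D) k x A < +oo.
Proof.
move=> mD mA; apply: (@le_lt_trans _ _ (\int[mu]_(x in D) (cst 1 x))).
  apply: ge0_le_integral => //; last by move=> x _; exact: pker_le1.
  exact/measurable_funTS/measurable_kernel.
by rewrite integral_cst// mul1e (le_lt_trans (le_measure _ _ _ (subsetT D)))
  ?inE// (fin_num_fun_lty (fin_num_measure mu)).
Qed.

End probability_kernel_bounds.

Section reversible_tensor.
Local Open Scope ereal_scope.
Context d (T : measurableType d) (R : realType) (K : nat).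
Local Notation X := (K.-tuple T).
Variables (P : {finite_measure set X -> \bar R}) (Q : R.-pker X ~> X).

Lemma reversible_rect :
  (forall A B : 'I_K -> set T, (forall i, measurable (A i)) -> (forall i, measurable (B i)) ->
    \int[P]_(x in rect B) Q x (rect A) = \int[P]_(x in rect A) Q x (rect B)) ->
  reversible (fun x => Q x) P.
Proof.
move=> Q_rect.
have Q_ge0 A x : 0 <= Q x A by [].
have mQ A : measurable A -> measurable_fun setT (fun x => Q x A).
  exact: measurable_kernel.
have rect_any A B : (forall i, measurable (A i)) -> measurable B ->
    \int[P]_(x in B) Q x (rect A) = \int[P]_(x in rect A) Q x B.
  move=> mA mB; have mrA := measurable_rect mA.
  apply: (measure_unique_rect (m1 := mdensity P (Q_ge0 (rect A)) (mQ _ mrA))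
                              (m2 := kintegral P Q mrA)) => //.
    exact: integral_pker_lty.
  by move=> B' mB'; exact: Q_rect.
move=> A B mA mB.
apply: (measure_unique_rect (m1 := kintegral P Q mB)
                            (m2 := mdensity P (Q_ge0 B) (mQ _ mB))) => //.
  exact: integral_pker_lty.
by move=> A' mA'; exact: rect_any.
Qed.

Variables (mu : 'I_K -> {finite_measure set T -> \bar R}) (p : 'I_K -> R.-pker T ~> T).
Hypotheses (P_rect : is_product_measure (fun i => mu i : set T -> \bar R) P)
  (Q_rect : forall x, is_product_measure (fun i => p i (tnth x i) : set T -> \bar R) (Q x)).

Lemma integral_rect_kernel (A B : 'I_K -> set T) :
  (forall i, measurable (A i)) -> (forall i, measurable (B i)) ->
  \int[P]_(x in rect B) Q x (rect A) =
  \prod_(i < K) \int[mu i]_(y in B i) p i y (A i).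
Proof.
move=> mA mB; pose f i y := (\1_(B i) y * fine (p i y (A i)))%R.
have p_fin i y : p i y (A i) \is a fin_num by exact: finite_kernel_measure.
have mp i : measurable_fun setT (fun y => p i y (A i)) by exact: measurable_kernel.
rewrite integral_mkcond_indic.
transitivity (\int[P]_x (tensor f x)%:E).
  apply: eq_integral => x _; rewrite (Q_rect x mA) -tensor_indic /f -tensorM EFinM.
  by congr (_ * _); rewrite /tensor -prodEFin; apply: eq_bigr => i _; rewrite fineK.
rewrite (integral_tensor _ P_rect).
- apply: eq_bigr => i _; rewrite [RHS]integral_mkcond_indic.
  by apply: eq_integral => y _; rewrite EFinM fineK.
- by move=> i; exact: fin_num_fun_lty (fin_num_measure (mu i)).
split=> [i y|i|i].
- by rewrite mulr_ge0// fine_ge0.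
- by apply: measurable_funM; [exact: measurable_indic|exact: measurableT_comp].
- rewrite (eq_integral (fun y => (\1_(B i) y)%:E * p i y (A i))).
    by rewrite -integral_mkcond_indic integral_pker_lty.
  by move=> y _; rewrite EFinM fineK.
Qed.

Lemma reversible_tensor : (forall i, reversible (fun y => p i y) (mu i)) ->
  reversible (fun x => Q x) P.
Proof.
move=> p_rev; apply: reversible_rect => A B mA mB.
by rewrite !integral_rect_kernel//; apply: eq_bigr => i _; exact: p_rev.
Qed.

End reversible_tensor.

Section reversible_mixture.
Local Open Scope ereal_scope.
Context d (X : measurableType d) (R : realType) (I : finType).
Variables (S : {set I}) (P mu : {measure set X -> \bar R})
  (nu : I -> {measure set X -> \bar R}) (c : R) (rho w : I -> X -> R)
  (q : I -> R.-pker X ~> X).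
Hypotheses (c_ge0 : (0 <= c)%R) (rho_ge0 : forall s x, (0 <= rho s x)%R)
  (mrho : forall s, measurable_fun setT (rho s))
  (w_ge0 : forall s x, (0 <= w s x)%R) (mw : forall s, measurable_fun setT (w s))
  (muE : forall A, measurable A -> mu A = c%:E * \sum_(s in S) nu s A)
  (nuE : forall s A, measurable A -> nu s A = \int[P]_(x in A) (rho s x)%:E)
  (w_rho : forall s x, s \in S -> (w s x * \sum_(s' in S) rho s' x)%R = rho s x).

Let rhoS x := (c * \sum_(s in S) rho s x)%R.

Let rhoS_ge0 x : 0 <= (rhoS x)%:E.
Proof. by rewrite lee_fin mulr_ge0// sumr_ge0. Qed.

Let mrhoS : measurable_fun setT (fun x => (rhoS x)%:E).
Proof. by apply/measurable_EFinP/measurable_funM => //; exact: measurable_sum_in. Qed.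

Let muE_density A : measurable A -> mu A = \int[P]_(x in A) (rhoS x)%:E.
Proof.
move=> mA; rewrite muE// /rhoS; under eq_integral do rewrite EFinM.
rewrite ge0_integralZl//; last 2 first.
- exact/measurable_funTS/measurable_EFinP/measurable_sum_in.
- by move=> x _; rewrite lee_fin sumr_ge0.
congr (_ * _); rewrite -big_enum /=.
transitivity (\sum_(s <- enum S) \int[P]_(x in A) (rho s x)%:E).
  by apply: eq_bigr => s _; exact: nuE.
rewrite -ge0_integral_sum//; last 2 first.
- by move=> s; exact/measurable_funTS/measurable_EFinP.
- by move=> s x _; rewrite lee_fin.
by apply: eq_integral => x _; rewrite sumEFin big_enum.
Qed.

Let mixture_ge0 A x : 0 <= \sum_(s in S) (w s x)%:E * q s x A.
Proof. by rewrite sume_ge0// => s _; rewrite mule_ge0// lee_fin. Qed.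

Let mmixture A : measurable A ->
  measurable_fun setT (fun x => \sum_(s in S) (w s x)%:E * q s x A).
Proof.
move=> mA; apply: emeasurable_sum_in => s; apply: emeasurable_funM.
  exact/measurable_EFinP.
exact: measurable_kernel.
Qed.

Lemma integral_mixture A B : measurable A -> measurable B ->
  \int[mu]_(x in B) \sum_(s in S) (w s x)%:E * q s x A =
  c%:E * \sum_(s in S) \int[nu s]_(x in B) q s x A.
Proof.
move=> mA mB.
have mBq s : measurable_fun setT (fun x => (\1_B x)%:E * q s x A).
  apply: emeasurable_funM; first exact/measurable_EFinP/measurable_indic.
  exact: measurable_kernel.
rewrite integral_mkcond_indic (integral_density rhoS_ge0 mrhoS _ muE_density)//; last 2 first.
- by move=> x; rewrite mule_ge0.
- by apply: emeasurable_funM; [exact/measurable_EFinP/measurable_indic|exact: mmixture].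
transitivity (\int[P]_x \sum_(s <- enum S)
    c%:E * ((\1_B x)%:E * q s x A * (rho s x)%:E)).
  apply: eq_integral => x _; rewrite big_enum ge0_sume_distrr; last first.
    by move=> s _; rewrite mule_ge0// lee_fin.
  rewrite ge0_sume_distrl; last by move=> s _; rewrite !mule_ge0// lee_fin.
  apply: eq_bigr => s sS; rewrite -[q s x A]fineK ?finite_kernel_measure//.
  by rewrite -!EFinM -(w_rho x sS); congr EFin; rewrite /rhoS; ring.
rewrite ge0_integral_sum//; last 2 first.
- move=> s; apply: emeasurable_funM; first exact: measurable_cst.
  by apply: emeasurable_funM; [exact: mBq|exact/measurable_EFinP].
- by move=> s x _; rewrite !mule_ge0// lee_fin.
rewrite -big_enum ge0_sume_distrr; last by move=> s _; exact: integral_ge0.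
apply: eq_bigr => s _; rewrite ge0_integralZl//; last 2 first.
- by apply: emeasurable_funM; [exact: mBq|exact/measurable_EFinP].
- by move=> x _; rewrite !mule_ge0// lee_fin.
congr (_ * _); rewrite [RHS]integral_mkcond_indic (integral_density _ _ _ (nuE s))//.
- by move=> x; rewrite lee_fin.
- exact/measurable_EFinP.
Qed.

Lemma reversible_mixture : (forall s, reversible (fun x => q s x) (nu s)) ->
  reversible (fun x A => \sum_(s in S) (w s x)%:E * q s x A) mu.
Proof.
move=> q_rev A B mA mB; rewrite !integral_mixture//.
by congr (_ * _); apply: eq_bigr => s _; exact: q_rev.
Qed.

End reversible_mixture.

Section tempered_density.
Local Open Scope ereal_scope.
Context d (T : measurableType d) (R : realType).
Variables (mupr : {measure set T -> \bar R}) (Phi : T -> R) (t : \bar R).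

Lemma measurable_tdensity : measurable_fun setT Phi ->
  measurable_fun setT (tdensity mupr Phi t).
Proof.
move=> mPhi; apply: measurable_funM => //.
by apply: measurableT_comp => //; apply: measurableT_comp => //; exact: measurable_funM.
Qed.

(* A vanishing (or infinite, which [fine] sends to 0) normalizing constant would
   make the density identically 0, since [0^-1 = 0]. *)
Lemma tdensity_gt0 (mu : probability T R) :
  (forall A, measurable A -> mu A = \int[mupr]_(x in A) (tdensity mupr Phi t x)%:E) ->
  forall x, (0 < tdensity mupr Phi t x)%R.
Proof.
move=> muE x; rewrite /tdensity divr_gt0 ?expR_gt0// lt_neqAle fine_ge0 ?andbT;
  last by apply: integral_ge0 => y _; rewrite lee_fin expR_ge0.
apply/negP => /eqP Z0.
suff : mu setT = 0 by rewrite probability_setT => /eqP; rewrite onee_eq0.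
by rewrite muE// integral0_eq// => y _; rewrite /tdensity -Z0 invr0 mulr0.
Qed.

End tempered_density.

Section swap_weights.
Context d (T : measurableType d) (R : realType) (K : nat).
Variables (pi : 'I_K -> T -> R) (S : {set {perm 'I_K}}).
Hypotheses (pi_gt0 : forall k x, 0 < pi k x) (mpi : forall k, measurable_fun setT (pi k))
  (S_neq0 : (0 < #|S|)%N).

Lemma swapped_density_gt0 s x : 0 < swapped_density pi s x.
Proof. by apply: prodr_gt0 => i _. Qed.

Lemma measurable_swapped_density s : measurable_fun setT (swapped_density pi s).
Proof. exact: (measurable_tensor (f := fun i => pi (s i))). Qed.

Lemma swapped_density_ratio (s s' : {perm 'I_K}) x :
  swapped_density pi s x / swapped_density pi s' x =
  tensor (fun i y => pi (s i) y / pi (s' i) y) x.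
Proof. by rewrite /tensor prodf_div. Qed.

Lemma sum_swapped_density_gt0 x : 0 < \sum_(s in S) swapped_density pi s x.
Proof.
move: S_neq0; rewrite card_gt0 => /set0Pn[s0 s0S].
rewrite (bigD1 s0)//= ltr_pwDl ?swapped_density_gt0//.
by apply: sumr_ge0 => s _; exact/ltW/swapped_density_gt0.
Qed.

Lemma swap_weight_ge0 s x : 0 <= swap_weight pi S s x.
Proof.
by rewrite divr_ge0// ltW// ?swapped_density_gt0// sum_swapped_density_gt0.
Qed.

Lemma measurable_swap_weight s : measurable_fun setT (swap_weight pi S s).
Proof.
apply: measurable_funM; first exact: measurable_swapped_density.
apply: measurable_funV_gt0; first exact: sum_swapped_density_gt0.
by apply: measurable_sum_in => s'; exact: measurable_swapped_density.
Qed.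

Lemma swap_weight_mul_sum s x (b : R) :
  swap_weight pi S s x * \sum_(s' in S) (swapped_density pi s' x / b) =
  swapped_density pi s x / b.
Proof.
rewrite -mulr_suml /swap_weight mulrA divfK//.
by rewrite gt_eqF// sum_swapped_density_gt0.
Qed.

End swap_weights.

Theorem proposition4
  (R : realType) (d : measure_display) (T : measurableType d)
  (mupr : probability T R) (Phi : T -> R) (mPhi : measurable_fun setT Phi)
  (K : nat) (hK : (0 < K)%N)
  (Temp : 'I_K -> \bar R)
  (hT1 : forall i : 'I_K, val i = 0%N -> Temp i = 1%E)
  (hTinc : forall i j : 'I_K, (i < j)%N -> (Temp i < Temp j)%E)
  (hZ : forall k : 'I_K,
     mupr.-integrable setT (fun x => (tempered Phi (Temp k) x)%:E))
  (mu : 'I_K -> probability T R)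
  (hmu : forall (k : 'I_K) (A : set T), measurable A ->
     mu k A = (\int[mupr]_(x in A) (tdensity mupr Phi (Temp k) x)%:E)%E)
  (p : 'I_K -> R.-pker T ~> T)
  (hrev : forall k : 'I_K, reversible (fun x => p k x) (mu k))
  (SK : {set {perm 'I_K}})
  (hSK0 : (0 < #|SK|)%N)
  (hSKinv : forall s, s \in SK -> s^-1%g \in SK)
  (psig : {perm 'I_K} -> R.-pker (K.-tuple T) ~> (K.-tuple T))
  (hpsig : forall (s : {perm 'I_K}) (th : K.-tuple T),
     is_product_measure (fun i : 'I_K => p (s i) (tnth th i)) (psig s th))
  (musig : {perm 'I_K} -> probability (K.-tuple T) R)
  (hmusig : forall s : {perm 'I_K},
     is_product_measure (fun i : 'I_K => mu (s i)) (musig s))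
  (muW : probability (K.-tuple T) R)
  (hmuW : forall A : set (K.-tuple T), measurable A ->
     muW A = (((#|SK|%:R)^-1)%:E * \sum_(s in SK) musig s A)%E) :
  reversible
    (wgpt_kernel (fun k => tdensity mupr Phi (Temp k)) SK (fun s th => psig s th))
    muW.
Proof.
pose pi k := tdensity mupr Phi (Temp k).
have pi_gt0 k x : 0 < pi k x := tdensity_gt0 (hmu k) x.
have mpi k : measurable_fun setT (pi k) := measurable_tdensity _ _ mPhi.
pose rho s x := swapped_density pi s x / swapped_density pi 1%g x.
have rho_ge0 s x : 0 <= rho s x by rewrite divr_ge0// ltW// swapped_density_gt0.
have musigE s A : measurable A -> musig s A = (\int[musig 1%g]_(x in A) (rho s x)%:E)%E.
  move=> mA; under eq_integral do rewrite /rho swapped_density_ratio.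
  apply: (density_tensor (hmusig 1%g) (hmusig s)) => // [i y|i|i B mB].
  - by rewrite divr_ge0// ltW.
  - by apply: measurable_funM => //; exact: measurable_funV_gt0.
  - apply: (density_ratio _ _ (mpi _) (mpi _) (hmu ((1 : {perm 'I_K})%g i)) (hmu (s i))) => // y.
    exact/ltW.
apply: (reversible_mixture (c := (#|SK|%:R)^-1) (P := musig 1%g) (rho := rho) (nu := musig)) => //.
- move=> s; apply: measurable_funM; first exact: measurable_swapped_density.
  apply: measurable_funV_gt0; last exact: measurable_swapped_density.
  exact: swapped_density_gt0.
- by move=> s x; exact: swap_weight_ge0.
- exact: measurable_swap_weight.
- by move=> s x _; exact: swap_weight_mul_sum.
- by move=> s; exact: reversible_tensor (hmusig s) (hpsig s) (fun i => hrev (s i)).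
Qed.
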